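(* Let $G=(V,E)$ be a finite undirected graph with $V=\{1,\dots,p\}$. Then the following are equivalent: (i) for every symmetric positive definite $p\times p$ real matrix $A$, the thresholded matrix $A_G$ is positive definite; (ii) $G=\bigcup_{i=1}^{\tau} G_i$ for some $\tau\in\mathbb{N}$, where $G_1,\dots,G_\tau$ are pairwise disconnected complete graphs (equivalently, every connected component of $G$ is a complete graph).
   Context: For a symmetric $p\times p$ real matrix $A=(a_{ij})$ and an undirected graph $G=(V,E)$ on $V=\{1,\dots,p\}$, the matrix $A_G$ obtained by thresholding $A$ with respect to $G$ is defined by $(A_G)_{ij}=a_{ij}$ if $i=j$ or $(i,j)\in E$, and $(A_G)_{ij}=0$ otherwise. *)

From HB Require Import structures.
From mathcomp Require Import all_boot all_order all_algebra.
From mathcomp Require Import reals.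
Set Implicit Arguments. Unset Strict Implicit. Unset Printing Implicit Defensive.
Import Order.TTheory GRing.Theory Num.Theory.
Local Open Scope ring_scope.

(* A finite simple undirected graph on vertex set 'I_p (= {1,...,p} shifted
   to {0,...,p-1}) is given by a symmetric irreflexive edge relation. *)
Definition simple_graph (p : nat) (e : rel 'I_p) : Prop :=
  symmetric e /\ irreflexive e.

Definition posdef (R : realType) (p : nat) (A : 'M[R]_p) : Prop :=
  A^T = A /\ forall x : 'cV[R]_p, x != 0 -> 0 < (x^T *m A *m x) 0 0.

Definition threshold (R : realType) (p : nat) (e : rel 'I_p) (A : 'M[R]_p)
  : 'M[R]_p :=
  \matrix_(i, j) (if (i == j) || e i j then A i j else 0).

Definition components_complete (p : nat) (e : rel 'I_p) : Prop :=
  forall i j : 'I_p, connect e i j -> i != j -> e i j.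

From HB Require Import structures.
From mathcomp Require Import all_boot all_order all_algebra.
From mathcomp Require Import reals.
From mathcomp Require Import lra.
Import Order.TTheory GRing.Theory Num.Theory.
Local Open Scope ring_scope.

(* If the components of G are complete, A_G keeps exactly the entries whose
   indices lie in a common component, so x^T A_G x = sum_k (P_k x)^T A (P_k x)
   with P_k the coordinate projection onto the k-th component; every term is
   nonnegative and the one of a component meeting the support of x is positive.
   Conversely, if a - b - c is an induced path, then I + 4 u u^T with u the
   indicator vector of {a, b, c} is positive definite, but its thresholding
   takes the value -1 at e_a - e_b + e_c.  Hence adjacency is transitive on
   distinct vertices, and every connected component is complete. *)

Section QuadraticForms.
Context {R : realType} {p : nat}.
Implicit Types (A : 'M[R]_p) (x u : 'cV[R]_p).

Lemma trmx11 (M : 'M[R]_1) : M^T = M.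
Proof. by apply/matrixP => i j; rewrite mxE !ord1. Qed.

Lemma cV_neq0_coord x : x != 0 -> exists i, x i 0 != 0.
Proof.
move=> nx; apply/existsP; apply: contraR nx; rewrite negb_exists => /forallP x0.
apply/eqP/matrixP => i j; rewrite mxE (ord1 j); exact/eqP/negPn/x0.
Qed.

Lemma trmx_mul_self_gt0 x : x != 0 -> 0 < (x^T *m x) 0 0.
Proof.
move=> /cV_neq0_coord [i xi]; rewrite mxE (bigD1 i) //= mxE.
apply: ltr_wpDr; first by apply: sumr_ge0 => j _; rewrite mxE -expr2 sqr_ge0.
by rewrite -expr2 lt_def sqr_ge0 sqrf_eq0 xi.
Qed.

Lemma posdef_form_ge0 A x : posdef A -> 0 <= (x^T *m A *m x) 0 0.
Proof.
move=> [_ Apd]; have [->|nx] := eqVneq x 0; last exact/ltW/Apd.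
by rewrite mulmx0 mxE.
Qed.

Lemma posdef_id_add_rank1 u (c : R) : 0 <= c -> posdef (1%:M + c *: (u *m u^T)).
Proof.
move=> c0; split; first by rewrite linearD /= linearZ /= trmx1 trmx_mul trmxK.
move=> x nx.
have -> : x^T *m (1%:M + c *: (u *m u^T)) *m x =
          x^T *m x + c *: ((u^T *m x)^T *m (u^T *m x)).
  by rewrite mulmxDr mulmxDl mulmx1 -scalemxAr -scalemxAl trmx_mul trmxK !mulmxA.
rewrite trmx11 mxE [X in _ + X]mxE [in c * _]mxE big_ord1 -expr2.
apply: ltr_wpDr; [by rewrite mulr_ge0 ?sqr_ge0 | exact: trmx_mul_self_gt0].
Qed.

Lemma form_delta_mx A i j :
  ((delta_mx i 0 : 'cV_p)^T *m A *m (delta_mx j 0 : 'cV_p)) 0 0 = A i j.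
Proof. by rewrite trmx_delta -rowE -colE !mxE. Qed.

End QuadraticForms.

Section ClassThreshold.
Context {R : realType} {p : nat} {T : finType}.
Variable f : 'I_p -> T.

Definition class_threshold (A : 'M[R]_p) : 'M[R]_p :=
  \matrix_(i, j) (if f i == f j then A i j else 0).

Definition class_proj (k : T) : 'M[R]_p := diag_mx (\row_i (f i == k)%:R).

Lemma class_threshold_sum A :
  class_threshold A = \sum_k class_proj k *m A *m class_proj k.
Proof.
apply/matrixP => i j; rewrite summxE !mxE.
under eq_bigr do rewrite mul_mx_diag mul_diag_mx !mxE.
rewrite (bigD1 (f i)) //= big1 ?addr0 => [|k /negbTE fik]; last first.
  by rewrite eq_sym fik !mul0r.
by rewrite eqxx mul1r eq_sym; case: eqP; rewrite ?mulr1 ?mulr0.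
Qed.

Lemma posdef_class_threshold A : posdef A -> posdef (class_threshold A).
Proof.
move=> Apd; have [At _] := Apd; split.
  by apply/matrixP => i j; rewrite !mxE eq_sym -[in RHS]At mxE.
move=> x /cV_neq0_coord [i xi].
have proj_form k : (x^T *m (class_proj k *m A *m class_proj k) *m x) 0 0 =
                   ((class_proj k *m x)^T *m A *m (class_proj k *m x)) 0 0.
  by rewrite trmx_mul tr_diag_mx !mulmxA.
rewrite class_threshold_sum mulmx_sumr mulmx_suml summxE.
under eq_bigr do rewrite proj_form.
rewrite (bigD1 (f i)) //=; apply: ltr_wpDr.
  by apply: sumr_ge0 => k _; exact: posdef_form_ge0.
have [_ /(_ (class_proj (f i) *m x))] := Apd; apply.
apply/negP => /eqP/matrixP/(_ i 0); rewrite mul_diag_mx !mxE eqxx mul1r.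
by move/eqP; rewrite (negbTE xi).
Qed.

End ClassThreshold.

Section GraphThreshold.
Context {R : realType} {p : nat} {e : rel 'I_p}.

Lemma threshold_posdef_trans :
  simple_graph e ->
  (forall A : 'M[R]_p, posdef A -> posdef (threshold e A)) ->
  forall a b c, e a b -> e b c -> a != c -> e a c.
Proof.
move=> [sym irr] thrP a b c eab ebc ac; apply: contraT => eac.
pose d i : 'cV[R]_p := delta_mx i 0.
have [_] := thrP _ (posdef_id_add_rank1 (d a + d b + d c) _ (ler0n R 4)).
set M := threshold _ _ => Mpd.
have ab : a != b by apply: contraTneq eab => ->; rewrite irr.
have bc : b != c by apply: contraTneq ebc => ->; rewrite irr.
have x0 : d a - d b + d c != 0.
  apply/negP => /eqP/matrixP/(_ a 0); rewrite !mxE !eqxx (negbTE ab) (negbTE ac).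
  by move/eqP; rewrite subr0 addr0 oner_eq0.
(* On {a, b, c} the matrix M is [[5, 4, 0], [4, 5, 4], [0, 4, 5]]. *)
have := Mpd _ x0.
rewrite !linearD !linearN /= !mulmxDl !mulNmx !(form_delta_mx, mxE).
rewrite !big_ord1 !mxE !eqxx !irr (sym b a) (sym c b) (sym c a) eab ebc (negbTE eac).
rewrite ![b == a]eq_sym ![c == b]eq_sym ![c == a]eq_sym.
rewrite (negbTE ab) (negbTE bc) (negbTE ac) /=.
by move=> ?; exfalso; lra.
Qed.

Lemma components_complete_trans :
  (forall a b c, e a b -> e b c -> a != c -> e a c) -> components_complete e.
Proof.
move=> etr i _ /connectP [s + ->].
elim: s i => [|k s IHs] i /=; first by rewrite eqxx.
case/andP=> eik /IHs {}IHs ilast.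
have [<- //|klast] := eqVneq k (last k s).
exact: etr eik (IHs klast) ilast.
Qed.

Lemma threshold_root (A : 'M[R]_p) :
  symmetric e -> components_complete e ->
  threshold e A = class_threshold (fingraph.root e) A.
Proof.
move=> esym ecc; apply/matrixP => i j.
rewrite !mxE (root_connect (sym_connect_sym esym)).
congr (if _ then _ else _); apply/idP/idP.
  by case/orP => [/eqP -> | /connect1].
by have [-> | ij /ecc ->] := eqVneq i j; rewrite ?eqxx ?orbT.
Qed.

End GraphThreshold.

Theorem theorem3 (R : realType) (p : nat) (e : rel 'I_p) :
  simple_graph e ->
  ((forall A : 'M[R]_p, posdef A -> posdef (threshold e A)) <->
   components_complete e).
Proof.
move=> eG; split=> [thrP | ecc A Apd].
  exact: components_complete_trans (threshold_posdef_trans eG thrP).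
rewrite (threshold_root A eG.1 ecc); exact: posdef_class_threshold.
Qed.
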